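(* Let $(\mathcal T_0,\mathfrak c)$ be a colored initial triangulation in $\mathbb R^n$, $n\ge2$, let $\mathcal T\in\mathbb B$ and $T\in\mathcal T$, and consider the call $\mathrm{Refine}(\mathcal T,T)$. (i) If $T'\in\mathbb T$ is flagged for refinement in a recursive call of this procedure, then there is a chain $T_0,\dots,T_J\in\mathbb T$, $J\in\mathbb N_0$, with $T_0=T$, $T_J=T'$ and $\mathrm{bse}(T_j)\in\mathcal E(T_{j+1})$ for all $j=0,\dots,J-1$. (ii) If $T'\in\mathbb T$ is a simplex resulting from this procedure (i.e. created by it), then there is a chain $T_0,\dots,T_J\in\mathbb T$, $J\in\mathbb N_0$, with $T_0=T$ and $\mathrm{bse}(T_j)\in\mathcal E(T_{j+1})$ for $j=0,\dots,J-1$, such that $T'$ is a child of $T_J$.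
   Context: A colored initial triangulation is a conforming triangulation $\mathcal T_0$ of a polyhedral domain in $\mathbb R^n$ (finite set of $n$-simplices with disjoint interiors, any two meeting in the empty set or a common subsimplex) with $\mathfrak c:\mathcal V(\mathcal T_0)\to\{0,\dots,n\}$ such that the vertices of each simplex have distinct colors. Each $T\in\mathcal T_0$ is tagged as $[v_n,v_0,\dots,v_{n-1}]_n$ where $\mathfrak c(v_j)=j$. Maubach's bisection of a tagged simplex $[v_0,\dots,v_n]_\gamma$: bisection edge $\mathrm{bse}=[v_0,v_\gamma]$, $v'=(v_0+v_\gamma)/2$, $\gamma'=\gamma-1$ if $\gamma\ge2$ and $n$ otherwise; children $[v_0,\dots,v_{\gamma-1},v',v_{\gamma+1},\dots,v_n]_{\gamma'}$ and $[v_1,\dots,v_\gamma,v',v_{\gamma+1},\dots,v_n]_{\gamma'}$. $\mathcal E(S)$ is the set of edges of $S$. $\mathrm{Refine}(\mathcal T,T)$: let $e=\mathrm{bse}(T)$ and $\omega(e)$ the simplices of $\mathcal T$ having $e$ as an edge; if some $T'\in\omega(e)$ has $\mathrm{bse}(T')\ne e$, then $T'$ is flagged for refinement and the procedure returns $\mathrm{Refine}(\mathrm{Refine}(\mathcal T,T'),T)$; otherwise it replaces each simplex in $\omega(e)$ by its two children. $\mathbb B$ is the set of triangulations obtained from $\mathcal T_0$ by finitely many such refinements, $\mathbb T$ the set of all simplices occurring in elements of $\mathbb B$. *)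

From mathcomp Require Import all_boot all_order all_algebra.
From mathcomp Require Import reals.
Set Implicit Arguments. Unset Strict Implicit. Unset Printing Implicit Defensive.
Import Order.TTheory GRing.Theory Num.Theory.
Local Open Scope ring_scope.

Section Bisection.
Variables (R : realType) (n : nat).

Definition point := 'rV[R]_n.

(* A tagged simplex [v_0, ..., v_n]_gamma : (vertex list, tag gamma). *)
Definition simplex := (seq point * nat)%type.
Definition verts (K : simplex) : seq point := K.1.
Definition tag (K : simplex) : nat := K.2.

Definition wf_simplex (K : simplex) : Prop :=
  size (verts K) = n.+1 /\ (1 <= tag K <= n)%N.

Definition aff_indep (K : simplex) : Prop :=
  free [seq v - head 0 (verts K) | v <- behead (verts K)].

Definition conv (W : seq point) : point -> Prop := fun x =>
  exists lam : 'I_(size W) -> R,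
    (forall i, 0 <= lam i) /\ \sum_i lam i = 1 /\
    x = \sum_i lam i *: W`_i.

Definition interior_s (K : simplex) : point -> Prop := fun x =>
  exists lam : 'I_(size (verts K)) -> R,
    (forall i, 0 < lam i) /\ \sum_i lam i = 1 /\
    x = \sum_i lam i *: (verts K)`_i.

Definition edge := (point * point)%type.
Definition edge_eq (e e' : edge) : bool := (e == e') || (e == (e'.2, e'.1)).
Definition has_edge (e : edge) (K : simplex) : bool :=
  [&& e.1 \in verts K, e.2 \in verts K & e.1 != e.2].

Definition bse (K : simplex) : edge :=
  ((verts K)`_0, (verts K)`_(tag K)).
Definition midpt (K : simplex) : point :=
  2^-1 *: ((verts K)`_0 + (verts K)`_(tag K)).
Definition new_tag (K : simplex) : nat :=
  if (2 <= tag K)%N then (tag K).-1 else n.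
Definition child1 (K : simplex) : simplex :=
  (set_nth 0 (verts K) (tag K) (midpt K), new_tag K).
Definition child2 (K : simplex) : simplex :=
  (drop 1 (take (tag K).+1 (verts K)) ++ midpt K :: drop (tag K).+1 (verts K),
   new_tag K).
Definition is_child (K' K : simplex) : Prop := K' = child1 K \/ K' = child2 K.

Definition tri := seq simplex.

Definition colored_initial (T0 : tri) (c : point -> 'I_n.+1) : Prop :=
  uniq T0 /\
  (forall K, K \in T0 -> wf_simplex K /\ aff_indep K) /\
  (forall K K', K \in T0 -> K' \in T0 -> K != K' ->
     forall x, ~ (interior_s K x /\ interior_s K' x)) /\
  (forall K K', K \in T0 -> K' \in T0 ->
     exists W : seq point,
       {subset W <= verts K} /\ {subset W <= verts K'} /\
       (forall x, (conv (verts K) x /\ conv (verts K') x) <-> conv W x)) /\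
  (forall K, K \in T0 -> uniq [seq c v | v <- verts K]) /\
  (forall K, K \in T0 ->
     tag K = n /\ c (verts K)`_0 = ord_max /\
     forall j : 'I_n, c (verts K)`_j.+1 = widen_ord (leqnSn n) j).

Definition omega (Tr : tri) (e : edge) : seq simplex :=
  [seq K <- Tr | has_edge e K].

Definition bisect_patch (Tr : tri) (e : edge) : tri :=
  [seq K <- Tr | ~~ has_edge e K] ++
  flatten [seq [:: child1 K; child2 K] | K <- omega Tr e].

(* refine_run Tr T Tr' F C : the call Refine(Tr, T) can terminate with
   result Tr', where F lists all simplices flagged for refinement during
   the call (including in all recursive calls) and C lists all simplices
   created by the call. *)
Inductive refine_run : tri -> simplex -> tri -> seq simplex -> seq simplex -> Prop :=
| RefineBase Tr T :
    (forall K, K \in omega Tr (bse T) -> edge_eq (bse K) (bse T)) ->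
    refine_run Tr T (bisect_patch Tr (bse T)) [::]
      (flatten [seq [:: child1 K; child2 K] | K <- omega Tr (bse T)])
| RefineRec Tr T T' Tr1 Tr2 F1 C1 F2 C2 :
    T' \in omega Tr (bse T) -> ~~ edge_eq (bse T') (bse T) ->
    refine_run Tr T' Tr1 F1 C1 ->
    refine_run Tr1 T Tr2 F2 C2 ->
    refine_run Tr T Tr2 (T' :: F1 ++ F2) (C1 ++ C2).

Inductive in_BB (T0 : tri) : tri -> Prop :=
| BB_init : in_BB T0 T0
| BB_step Tr T Tr' F C :
    in_BB T0 Tr -> T \in Tr -> refine_run Tr T Tr' F C -> in_BB T0 Tr'.

Definition in_TT (T0 : tri) (K : simplex) : Prop :=
  exists Tr, in_BB T0 Tr /\ K \in Tr.

Definition chain (T0 : tri) (T T' : simplex) : Prop :=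
  exists (J : nat) (Ts : nat -> simplex),
    Ts 0%N = T /\ Ts J = T' /\
    (forall j, (j <= J)%N -> in_TT T0 (Ts j)) /\
    (forall j, (j < J)%N -> has_edge (bse (Ts j)) (Ts j.+1)).

End Bisection.

(** The chains are read off the recursion tree of [Refine(Tr, T)]: a simplex
    flagged by the call on [K] contains [bse K], so a chain from [T] to [K]
    extends by one step to it; and a simplex created by the base case of the
    call on [K] is a child of a simplex of [omega(bse K)], reached from [K] by
    one more step. *)

From mathcomp Require Import all_boot all_order all_algebra.
From mathcomp Require Import reals.
Set Implicit Arguments. Unset Strict Implicit.

Section RefineChains.
Variables (R : realType) (n : nat) (T0 : tri R n).

Lemma chain_refl (T : simplex R n) : in_TT T0 T -> chain T0 T T.
Proof. by move=> HT; exists 0%N, (fun=> T). Qed.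

Lemma chain_cons (T T' T'' : simplex R n) :
  in_TT T0 T -> has_edge (bse T) T' -> chain T0 T' T'' -> chain T0 T T''.
Proof.
move=> HT HTT' [J [Ts [Ts0 [TsJ [Ts_TT Ts_edge]]]]].
exists J.+1, (fun j => if j is j'.+1 then Ts j' else T).
do 3!split=> //; first by case=> [|j] /=; last exact: Ts_TT.
by case=> [|j] /=; [rewrite Ts0 | exact: Ts_edge].
Qed.

Lemma mem_omega (Tr : tri R n) (e : edge R n) (K : simplex R n) :
  (K \in omega Tr e) = has_edge e K && (K \in Tr).
Proof. exact: mem_filter. Qed.

Lemma mem_in_TT (Tr : tri R n) (K : simplex R n) :
  in_BB T0 Tr -> K \in Tr -> in_TT T0 K.
Proof. by exists Tr. Qed.

(* The refined simplex is only assumed to lie in [TT], not in the current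
   triangulation: after the first recursive call of [RefineRec] it need not
   be tracked in the intermediate triangulation. *)
Lemma refine_run_chain (Tr Tr' : tri R n) (T : simplex R n)
    (F C : seq (simplex R n)) :
  refine_run Tr T Tr' F C -> in_BB T0 Tr -> in_TT T0 T ->
    (forall T', T' \in F -> chain T0 T T') /\
    (forall T', T' \in C -> exists2 TJ, chain T0 T TJ & is_child T' TJ).
Proof.
elim=> {Tr T Tr' F C} [Tr T _ | Tr T T' Tr1 Tr2 F1 C1 F2 C2].
  move=> BB_Tr TT_T; split=> // T' /flattenP[s /mapP[K]].
  rewrite mem_omega => /andP[T_K K_Tr] -> T'_K.
  exists K; first exact: chain_cons TT_T T_K (chain_refl (mem_in_TT BB_Tr K_Tr)).
  by move: T'_K; rewrite !inE => /orP[] /eqP->; [left | right].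
rewrite mem_omega => /andP[T_T' T'_Tr] _ run1 IH1 run2 IH2 BB_Tr TT_T.
have TT_T' := mem_in_TT BB_Tr T'_Tr.
have [flagged1 created1] := IH1 BB_Tr TT_T'.
have [flagged2 created2] := IH2 (BB_step BB_Tr T'_Tr run1) TT_T.
split=> [U | U]; last first.
  rewrite mem_cat => /orP[/created1[TJ chainJ childJ] | /created2 //].
  by exists TJ; first exact: chain_cons TT_T T_T' chainJ.
rewrite inE mem_cat => /orP[/eqP-> | /orP[/flagged1 chainU | /flagged2 //]].
  exact: chain_cons TT_T T_T' (chain_refl TT_T').
exact: chain_cons TT_T T_T' chainU.
Qed.

End RefineChains.

Theorem lemma2p4 (R : realType) (n : nat) (T0 : tri R n)
    (c : point R n -> 'I_n.+1) :
  (2 <= n)%N -> colored_initial T0 c ->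
  forall (Tr : tri R n) (T : simplex R n),
    in_BB T0 Tr -> T \in Tr ->
  forall (Tr' : tri R n) (F C : seq (simplex R n)),
    refine_run Tr T Tr' F C ->
    (forall T', T' \in F -> in_TT T0 T' -> chain T0 T T') /\
    (forall T', T' \in C -> in_TT T0 T' ->
       exists TJ, chain T0 T TJ /\ is_child T' TJ).
Proof.
move=> _ _ Tr T BB_Tr T_Tr Tr' F C run.
have [flagged created] := refine_run_chain run BB_Tr (mem_in_TT BB_Tr T_Tr).
split=> T' T'_run _; first exact: flagged.
by have [TJ] := created T' T'_run; exists TJ.
Qed.
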